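(* Let $\mathfrak{M}$ be a variety of associative rings such that for all finite rings $R,S\in\mathfrak{M}$, $\Gamma(R)\cong\Gamma(S)$ implies $R\cong S$. Then there exist $m\in\mathbb{N}$, $g(x)\in\mathbb{Z}[x]$ and an integer $d$ such that $mx\in T(\mathfrak{M})$ and $dx+x^2g(x)\in T(\mathfrak{M})$, where either $d=1$ or $d=q_1q_2\cdots q_l$ with $q_1,\ldots,q_l$ pairwise distinct prime divisors of $m$.
   Context: All rings are associative, not necessarily commutative and not necessarily with identity. For a ring $R$, the zero-divisor graph $\Gamma(R)$ is the graph whose vertices are all nonzero (one-sided or two-sided) zero-divisors of $R$, two distinct vertices $x,y$ being adjacent iff $xy=0$ or $yx=0$. For a variety $\mathfrak{M}$, $T(\mathfrak{M})$ denotes the T-ideal (in the free associative ring $\mathbb{Z}\langle x_1,x_2,\ldots\rangle$) of all polynomial identities satisfied by all rings of $\mathfrak{M}$. *)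

From HB Require Import structures.
From mathcomp Require Import all_boot all_order all_algebra.
Set Implicit Arguments. Unset Strict Implicit. Unset Printing Implicit Defensive.
Import GRing.Theory.
Local Open Scope ring_scope.

Record rng := Rng {
  rcar :> zmodType;
  rmul : rcar -> rcar -> rcar;
  rmulA : forall x y z, rmul x (rmul y z) = rmul (rmul x y) z;
  rmulDl : forall x y z, rmul (x + y) z = rmul x z + rmul y z;
  rmulDr : forall x y z, rmul x (y + z) = rmul x y + rmul x z }.

(* Elements of the free (non-unital) associative ring Z<x_0, x_1, ...>,
   presented as terms; two terms denote the same element iff they evaluate
   equally in every rng. *)
Inductive term :=
| tVar of nat
| tZero
| tAdd of term & term
| tNeg of term
| tScal of int & term
| tMul of term & term.

Fixpoint eval (R : rng) (a : nat -> R) (t : term) : R :=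
  match t with
  | tVar i => a i
  | tZero => 0
  | tAdd u v => eval a u + eval a v
  | tNeg u => - eval a u
  | tScal z u => eval a u *~ z
  | tMul u v => rmul (eval a u) (eval a v)
  end.

Definition identity_of (R : rng) (f : term) := forall a : nat -> R, eval a f = 0.

Definition in_variety (E : term -> Prop) (R : rng) :=
  forall f, E f -> identity_of R f.

Definition T_ideal (E : term -> Prop) (f : term) :=
  forall R : rng, in_variety E R -> identity_of R f.

Definition finite_rng (R : rng) := exists s : seq R, forall x : R, x \in s.

Definition is_zd (R : rng) (x : R) :=
  x != 0 /\ exists y : R, y != 0 /\ (rmul x y = 0 \/ rmul y x = 0).
Definition zdv (R : rng) := {x : R | is_zd x}.
Definition zadj (R : rng) (x y : zdv R) :=
  proj1_sig x <> proj1_sig y /\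
  (rmul (proj1_sig x) (proj1_sig y) = 0 \/ rmul (proj1_sig y) (proj1_sig x) = 0).
Definition zd_graph_iso (R S : rng) :=
  exists f : zdv R -> zdv S, bijective f /\ forall x y, zadj x y <-> zadj (f x) (f y).

Definition rng_iso (R S : rng) :=
  exists f : R -> S, [/\ bijective f,
    forall x y, f (x + y) = f x + f y &
    forall x y, f (rmul x y) = rmul (f x) (f y)].

(* tpowS t n = t^(n+1) *)
Fixpoint tpowS (t : term) (n : nat) : term :=
  match n with 0 => t | n'.+1 => tMul (tpowS t n') t end.

(* x2g g t = t^2 * g(t) for g in Z[x] *)
Definition x2g (g : {poly int}) (t : term) : term :=
  foldr tAdd tZero [seq tScal g`_i (tpowS t i.+1) | i <- iota 0 (size g)].

Set Warnings "-notation-overridden,-ambiguous-paths".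
From mathcomp Require Import all_boot all_order all_algebra all_fingroup.
From mathcomp Require Import zify ring.
From Stdlib Require Import ProofIrrelevance ClassicalEpsilon.

Set Implicit Arguments.
Unset Strict Implicit.
Unset Printing Implicit Defensive.
Import GRing.Theory Num.Theory.
Local Open Scope ring_scope.

(* Zero rngs on Z/p^2 and on (Z/p)^2 have isomorphic zero-divisor graphs (all
   nonzero elements are pairwise adjacent) but are not isomorphic, and both
   satisfy every identity whose linear coefficients are divisible by p^2.  So for
   every prime p some identity of the variety has a linear coefficient not
   divisible by p^2.  Setting all variables but one to 0, every such coefficient
   is the linear coefficient of a one-variable identity n x + x^2 g(x); these n
   form an ideal n_0 Z, and n_0 is squarefree, i.e. the product of its prime
   divisors.  Combining the identities P(2x) - 2^j P(x) kills the nonlinear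
   terms of such an identity P, which yields m x = 0 for some m > 0; then
   m n_0 x = 0 as well, and every prime divisor of n_0 divides m n_0. *)

Section RngTheory.
Variable R : rng.
Implicit Types x y : R.

Lemma rmul0l y : rmul 0 y = 0.
Proof. by apply: (@addrI _ (rmul 0 y)); rewrite -rmulDl !addr0. Qed.

Lemma rmul0r x : rmul x 0 = 0.
Proof. by apply: (@addrI _ (rmul x 0)); rewrite -rmulDr !addr0. Qed.

Lemma rmulNl x y : rmul (- x) y = - rmul x y.
Proof. by apply: (@addrI _ (rmul x y)); rewrite -rmulDl !subrr rmul0l. Qed.

Lemma rmulNr x y : rmul x (- y) = - rmul x y.
Proof. by apply: (@addrI _ (rmul x y)); rewrite -rmulDr !subrr rmul0r. Qed.

Lemma rmulnl x y n : rmul (x *+ n) y = rmul x y *+ n.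
Proof. by elim: n => [|n IH]; rewrite ?mulr0n ?rmul0l // !mulrS rmulDl IH. Qed.

Lemma rmulnr x y n : rmul x (y *+ n) = rmul x y *+ n.
Proof. by elim: n => [|n IH]; rewrite ?mulr0n ?rmul0r // !mulrS rmulDr IH. Qed.

Lemma rmulzl x y (z : int) : rmul (x *~ z) y = rmul x y *~ z.
Proof. by case: z => n; rewrite ?NegzE ?mulrNz ?rmulNl -?pmulrn rmulnl. Qed.

Lemma rmulzr x y (z : int) : rmul x (y *~ z) = rmul x y *~ z.
Proof. by case: z => n; rewrite ?NegzE ?mulrNz ?rmulNr -?pmulrn rmulnr. Qed.

Lemma rmul_sumr x n (F : 'I_n -> R) :
  rmul x (\sum_(i < n) F i) = \sum_(i < n) rmul x (F i).
Proof.
apply: (big_rec2 (fun y z => rmul x y = z)); first exact: rmul0r.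
by move=> i y1 y2 _ <-; rewrite rmulDr.
Qed.

End RngTheory.

(* A list [:: c_0; c_1; ...] encodes c_0 x + c_1 x^2 + ..., an element of the
   free non-unital ring on one generator x. *)
Fixpoint padd (p q : seq int) : seq int :=
  match p, q with
  | [::], _ => q
  | _, [::] => p
  | c :: p', d :: q' => (c + d) :: padd p' q'
  end.

Definition pscale (k : int) (p : seq int) : seq int := map ( *%R k) p.

Fixpoint pmul (p q : seq int) : seq int :=
  if p is c :: p' then 0 :: padd (pscale c q) (pmul p' q) else [::].

(* [pdilate k p] encodes p(k x). *)
Fixpoint pdilate (k : int) (p : seq int) : seq int :=
  if p is c :: p' then (c * k) :: pscale k (pdilate k p') else [::].

Fixpoint peval {R : rng} (p : seq int) (a : R) : R :=
  if p is c :: p' then a *~ c + rmul a (peval p' a) else 0.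

Lemma nth_padd p q i : nth 0 (padd p q) i = nth 0 p i + nth 0 q i.
Proof. by elim: p q i => [|c p IH] [|d q] [|i] //=; rewrite ?addr0 ?add0r ?nth_nil. Qed.

Lemma nth_pscale k p i : nth 0 (pscale k p) i = k * nth 0 p i.
Proof. by elim: p i => [|c p IH] [|i] //=; rewrite mulr0. Qed.

Lemma nth_pdilate k p i : nth 0 (pdilate k p) i = nth 0 p i * k ^+ i.+1.
Proof.
elim: p i => [|c p IH] [|i] /=; rewrite ?mul0r ?expr1 //.
by rewrite nth_pscale IH [in RHS]exprS mulrCA.
Qed.

Lemma nth0_pmul p q : nth 0 (pmul p q) 0 = 0.
Proof. by case: p. Qed.

Section PolyEval.
Variable R : rng.
Implicit Types a : R.

Lemma peval_add p q a : peval (padd p q) a = peval p a + peval q a.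
Proof.
elim: p q => [|c p IH] [|d q] /=; rewrite ?add0r ?addr0 //.
by rewrite IH mulrzDr rmulDr addrACA.
Qed.

Lemma peval_scale k p a : peval (pscale k p) a = peval p a *~ k.
Proof.
elim: p => [|c p IH] /=; first by rewrite mul0rz.
by rewrite IH rmulzr mulrzDl mulrC mulrzA.
Qed.

Lemma peval_mul p q a : peval (pmul p q) a = rmul (peval p a) (peval q a).
Proof.
elim: p => [|c p IH] /=; first by rewrite rmul0l.
by rewrite mulr0z add0r peval_add peval_scale IH rmulDl rmulDr rmulzr rmulzl rmulA.
Qed.

Lemma peval_dilate k p a : peval (pdilate k p) a = peval p (a *~ k).
Proof.
elim: p => [|c p IH] //=.
by rewrite peval_scale IH rmulzr rmulzl mulrzA mulrzAC.
Qed.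

Lemma peval_eq0 p a : (forall i, nth 0 p i = 0) -> peval p a = 0.
Proof.
elim: p => [|c p IH] //= p0.
rewrite IH => [|i]; last exact: (p0 i.+1).
by rewrite rmul0r addr0 (p0 0%N : c = 0) mulr0z.
Qed.

Lemma peval_linear p a :
  (forall i, (0 < i)%N -> nth 0 p i = 0) -> peval p a = a *~ nth 0 p 0.
Proof.
case: p => [|c p] p0 /=; first by rewrite mulr0z.
by rewrite peval_eq0 ?rmul0r ?addr0 // => i; apply: (p0 i.+1).
Qed.

End PolyEval.

Fixpoint tpoly (i : nat) (t : term) : seq int :=
  match t with
  | tVar j => if j == i then [:: 1] else [::]
  | tZero => [::]
  | tAdd u v => padd (tpoly i u) (tpoly i v)
  | tNeg u => pscale (-1) (tpoly i u)
  | tScal z u => pscale z (tpoly i u)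
  | tMul u v => pmul (tpoly i u) (tpoly i v)
  end.

Definition lincoef (i : nat) (t : term) : int := nth 0 (tpoly i t) 0.

Definition at_var {R : rng} (i : nat) (a : R) : nat -> R :=
  fun k => if k == i then a else 0.

Lemma eval_at_var (R : rng) i (a : R) t : eval (at_var i a) t = peval (tpoly i t) a.
Proof.
elim: t => [j| |u IHu v IHv|u IHu|z u IHu|u IHu v IHv] /=.
- by rewrite /at_var; case: (j == i); rewrite //= rmul0r addr0.
- by [].
- by rewrite peval_add IHu IHv.
- by rewrite peval_scale IHu mulrN1z.
- by rewrite peval_scale IHu.
- by rewrite peval_mul IHu IHv.
Qed.

Fixpoint tvar_bound (t : term) : nat :=
  match t with
  | tVar j => j.+1
  | tZero => 0
  | tAdd u v | tMul u v => maxn (tvar_bound u) (tvar_bound v)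
  | tNeg u | tScal _ u => tvar_bound u
  end.

Lemma eval_mul0 (R : rng) (a : nat -> R) t n :
  (forall x y : R, rmul x y = 0) -> (tvar_bound t <= n)%N ->
  eval a t = \sum_(k < n) a k *~ lincoef k t.
Proof.
move=> mul0; elim: t n => [j| |u IHu v IHv|u IHu|z u IHu|u IHu v IHv] n /= tn.
- rewrite (bigD1 (Ordinal tn)) //= /lincoef /= eqxx mulr1z big1 ?addr0 // => k jk.
  by rewrite /= ifN ?mulr0z //; apply: contra jk => /eqP jk; apply/eqP/val_inj.
- by rewrite big1 // => k _; rewrite /lincoef /= mulr0z.
- move: tn; rewrite geq_max => /andP [un vn].
  rewrite (IHu n un) (IHv n vn) -big_split; apply: eq_bigr => k _.
  by rewrite /lincoef /= nth_padd mulrzDr.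
- rewrite (IHu n tn) -sumrN; apply: eq_bigr => k _.
  by rewrite /lincoef /= nth_pscale mulN1r mulrNz.
- rewrite (IHu n tn) mulrz_suml; apply: eq_bigr => k _.
  by rewrite /lincoef /= nth_pscale mulrC mulrzA.
- by rewrite mul0 big1 // => k _; rewrite /lincoef /= nth0_pmul mulr0z.
Qed.

Definition zero_rng (A : zmodType) : rng :=
  @Rng A (fun _ _ => 0) (fun _ _ _ => erefl) (fun _ _ _ => esym (addr0 0))
    (fun _ _ _ => esym (addr0 0)).

Lemma zero_rng_in_variety (E : term -> Prop) (A : zmodType) (n : nat) :
  (forall x : A, x *+ n = 0) -> (forall f, E f -> forall k, (n%:Z %| lincoef k f)%Z) ->
  in_variety E (zero_rng A).
Proof.
move=> nA nE f Ef a; rewrite (@eval_mul0 (zero_rng A) a f _ (fun _ _ => erefl) (leqnn _)).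
by apply: big1 => k _; rewrite -(divzK (nE f Ef k)) mulrzA -pmulrn nA.
Qed.

Lemma is_zd_zero_rng {A : zmodType} {x : zero_rng A} : x != 0 -> is_zd x.
Proof. by move=> x0; split=> //; exists x; split=> //; left. Qed.

(* In a zero rng every nonzero element is a zero-divisor and any two of them are
   adjacent, so the graph only sees the number of elements. *)
Lemma zero_rng_graph_iso (A B : zmodType) (h : A -> B) :
  bijective h -> h 0 = 0 -> zd_graph_iso (zero_rng A) (zero_rng B).
Proof.
case=> g hK gK h0.
have g0 : g 0 = 0 by rewrite -h0 hK.
have h_neq0 (x : A) : x != 0 -> h x != 0 by rewrite -{1}(hK x) -g0; apply: contra => /eqP->.
have g_neq0 (y : B) : y != 0 -> g y != 0 by rewrite -{1}(gK y) -h0; apply: contra => /eqP->.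
pose hz (x : zdv (zero_rng A)) : zdv (zero_rng B) :=
  exist _ (h (sval x)) (is_zd_zero_rng (h_neq0 _ (proj1 (proj2_sig x)))).
pose gz (y : zdv (zero_rng B)) : zdv (zero_rng A) :=
  exist _ (g (sval y)) (is_zd_zero_rng (g_neq0 _ (proj1 (proj2_sig y)))).
exists hz; split.
  exists gz => [[x zx]|[y zy]]; rewrite /gz /hz /=; move: (is_zd_zero_rng _).
    by rewrite hK => zx'; rewrite (proof_irrelevance _ zx' zx).
  by rewrite gK => zy'; rewrite (proof_irrelevance _ zy' zy).
move=> [x zx] [y zy]; rewrite /zadj /=; split=> -[xy _]; split; try by left.
  by move=> /(can_inj hK).
by move=> exy; apply: xy; rewrite exy.
Qed.

Lemma zero_rng_iso_mulrn (A B : zmodType) (n : nat) :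
  rng_iso (zero_rng A) (zero_rng B) -> (forall y : B, y *+ n = 0) ->
  forall x : A, x *+ n = 0.
Proof.
move=> [f [[g fK _] fD _]] nB x.
have f0 : f 0 = 0 by apply: (@addrI _ (f 0)); rewrite -fD !addr0.
have fn m : f (x *+ m) = f x *+ m.
  by elim: m => [|m IH]; rewrite ?mulr0n // !mulrS fD IH.
by rewrite -(fK (x *+ n)) fn nB -f0 fK.
Qed.

Lemma eq_card_bij_at (A B : finType) (a : A) (b : B) :
  #|A| = #|B| -> exists2 h : A -> B, bijective h & h a = b.
Proof.
move=> AB; pose h1 (x : A) : B := enum_val (cast_ord AB (enum_rank x)).
have h1_inj : injective h1 by move=> x y /enum_val_inj /cast_ord_inj /enum_rank_inj.
exists (fun x => tperm (h1 a) b (h1 x)); last by rewrite tpermL.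
by apply: inj_card_bij; [move=> x y /perm_inj /h1_inj | rewrite AB].
Qed.

Definition zd_graph_determined (E : term -> Prop) : Prop :=
  forall R S : rng, in_variety E R -> in_variety E S ->
    finite_rng R -> finite_rng S -> zd_graph_iso R S -> rng_iso R S.

Lemma Zp_mulrn_char (q : nat) (x : 'Z_q) : (1 < q)%N -> x *+ q = 0.
Proof. by move=> q_gt1; rewrite -mulr_natr pchar_Zp // mulr0. Qed.

(* Otherwise the zero rngs on Z/p^2 and on (Z/p)^2 both lie in the variety. *)
Lemma lincoef_not_sq_dvd (E : term -> Prop) (p : nat) :
  zd_graph_determined E -> prime p ->
  ~ (forall f, E f -> forall k, ((p * p)%N%:Z %| lincoef k f)%Z).
Proof.
move=> detE p_pr sqE; have p_gt1 := prime_gt1 p_pr.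
have pp_gt1 : (1 < p * p)%N by nia.
have charA (x : 'Z_(p * p)) : x *+ (p * p) = 0 by apply: Zp_mulrn_char.
have charB (y : 'Z_p * 'Z_p) : y *+ p = 0 by rewrite pairMnE !Zp_mulrn_char.
have charB2 (y : 'Z_p * 'Z_p) : y *+ (p * p) = 0 by rewrite mulrnA charB.
have [h h_bij h0] : exists2 h : 'Z_(p * p) -> 'Z_p * 'Z_p, bijective h & h 0 = 0.
  by apply: eq_card_bij_at; rewrite card_prod !card_ord !Zp_cast.
have finA : finite_rng (zero_rng 'Z_(p * p)) by exists (enum 'Z_(p * p)) => x; rewrite mem_enum.
have finB : finite_rng (zero_rng ('Z_p * 'Z_p)%type).
  by exists (enum {: 'Z_p * 'Z_p}) => x; rewrite mem_enum.
have iso := detE _ _ (zero_rng_in_variety charA sqE) (zero_rng_in_variety charB2 sqE)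
  finA finB (zero_rng_graph_iso h_bij h0).
have /eqP := congr1 val (zero_rng_iso_mulrn iso charB (1 : 'Z_(p * p))).
rewrite /= val_Zp_nat // modn_small; first by rewrite gtn_eqF // prime_gt0.
by rewrite -{1}[p]muln1 ltn_pmul2l // prime_gt0.
Qed.

Definition one_var_identity (E : term -> Prop) (s : seq int) : Prop :=
  forall R : rng, in_variety E R -> forall a : R, peval s a = 0.

Definition id_lincoef (E : term -> Prop) (z : int) : Prop :=
  exists2 s, nth 0 s 0 = z & one_var_identity E s.

Lemma id_lincoef_lincoef (E : term -> Prop) f k : E f -> id_lincoef E (lincoef k f).
Proof. by move=> Ef; exists (tpoly k f) => // R RE a; rewrite -eval_at_var; apply: RE. Qed.

Lemma id_lincoef0 (E : term -> Prop) : id_lincoef E 0.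
Proof. by exists [::]. Qed.

Lemma id_lincoefD (E : term -> Prop) z w :
  id_lincoef E z -> id_lincoef E w -> id_lincoef E (z + w).
Proof.
move=> [s <- sE] [t <- tE]; exists (padd s t); first by rewrite nth_padd.
by move=> R RE a; rewrite peval_add sE ?tE ?addr0.
Qed.

Lemma id_lincoefM (E : term -> Prop) c z : id_lincoef E z -> id_lincoef E (c * z).
Proof.
move=> [s <- sE]; exists (pscale c s); first by rewrite nth_pscale.
by move=> R RE a; rewrite peval_scale sE ?mul0rz.
Qed.

Lemma int_ideal_principal (I : int -> Prop) :
  I 0 -> (forall z w, I z -> I w -> I (z + w)) -> (forall c z, I z -> I (c * z)) ->
  exists n : nat, I n /\ forall z, I z -> (n %| z)%Z.
Proof.
move=> I0 ID IM; have [[z0 [Iz0 z0_neq0]]|I_eq0] := classic (exists z, I z /\ z != 0); last first.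
  exists 0%N; split=> // z Iz; rewrite dvd0z; apply: contraT => z_neq0.
  by case: I_eq0; exists z.
pose P n := (0 < n)%N && (if excluded_middle_informative (I n) then true else false).
have PP n : P n -> (0 < n)%N /\ I n.
  by rewrite /P; case: excluded_middle_informative => // In /andP[].
have exP : exists n, P n.
  exists (absz z0); rewrite /P absz_gt0 z0_neq0 /=.
  by case: excluded_middle_informative => //; rewrite abszEsg; case; apply: IM.
case: (ex_minnP exP) => n /PP [n_gt0 In] n_min; exists n; split=> // z Iz.
have Ir : I (z %% n)%Z.
  rewrite (_ : (z %% n)%Z = z + - (z %/ n)%Z * n); first by apply: ID => //; apply: IM.
  by rewrite {2}(divz_eq z n) mulNr addrC addKr.
have r_ge0 : 0 <= (z %% n)%Z by rewrite modz_ge0 // eqz_nat -lt0n.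
have r_lt : (z %% n)%Z < n by rewrite ltz_pmod // ltz_nat.
apply/dvdz_mod0P; move: Ir r_ge0 r_lt; case: (z %% n)%Z => // -[|r] // Ir _.
rewrite ltz_nat ltnNge n_min //.
by rewrite /P; case: excluded_middle_informative.
Qed.

(* [kill_coef j s] encodes s(2x) - 2^j s(x): the coefficient of x^j vanishes. *)
Definition kill_coef (j : nat) (s : seq int) : seq int :=
  padd (pdilate 2 s) (pscale (- 2 ^+ j) s).

Lemma one_var_identity_kill (E : term -> Prop) j s :
  one_var_identity E s -> one_var_identity E (kill_coef j s).
Proof. by move=> sE R RE a; rewrite peval_add peval_dilate peval_scale !sE ?mul0rz ?addr0. Qed.

Lemma nth_kill_coefs (J : seq nat) s i :
  nth 0 (foldr kill_coef s J) i = nth 0 s i * \prod_(j <- J) (2 ^+ i.+1 - 2 ^+ j).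
Proof.
elim: J => [|j J IH] /=; first by rewrite big_nil mulr1.
by rewrite nth_padd nth_pdilate nth_pscale IH big_cons; ring.
Qed.

Lemma two_sub_exp2_neq0 j : (2 <= j)%N -> (2 ^+ 1 - 2 ^+ j : int) != 0.
Proof.
case: j => [|[|j]] // _; rewrite subr_eq0 expr1 !exprS.
have : (1 <= (2 : int) ^+ j) by rewrite exprn_ege1.
by apply: contraTneq => e; lia.
Qed.

Lemma one_var_identity_char (E : term -> Prop) s :
  one_var_identity E s -> nth 0 s 0 != 0 ->
  exists2 m : nat, (0 < m)%N & T_ideal E (tScal m%:Z (tVar 0)).
Proof.
move=> sE s0_neq0; pose t := foldr kill_coef s (iota 2 (size s)).
have tE : one_var_identity E t.
  by rewrite /t; elim: (iota 2 (size s)) => //= j J; apply: one_var_identity_kill.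
have t_lin i : (0 < i)%N -> nth 0 t i = 0.
  move=> i_gt0; rewrite nth_kill_coefs.
  have [i_lt|i_ge] := ltnP i (size s); last by rewrite nth_default ?mul0r.
  apply/eqP; rewrite mulf_eq0 prodf_seq_eq0; apply/orP; right.
  apply/hasP; exists i.+1; last by rewrite subrr.
  by rewrite mem_iota; lia.
have t0_neq0 : nth 0 t 0 != 0.
  rewrite nth_kill_coefs mulf_neq0 // prodf_seq_neq0; apply/allP => j.
  by rewrite mem_iota => /andP [j_ge2 _]; apply: two_sub_exp2_neq0.
exists (absz (nth 0 t 0)); first by rewrite absz_gt0.
move=> R RE b /=; have := tE R RE (b 0%N); rewrite peval_linear // => tb.
by rewrite abszEsg mulrC mulrzA tb mul0rz.
Qed.

Fixpoint rpowS (R : rng) (a : R) (n : nat) : R :=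
  if n is n'.+1 then rmul (rpowS a n') a else a.

Lemma eval_tpowS (R : rng) (b : nat -> R) n : eval b (tpowS (tVar 0) n) = rpowS (b 0%N) n.
Proof. by elim: n => //= n ->. Qed.

Lemma rmul_rpowS (R : rng) (a : R) n : rmul a (rpowS a n) = rpowS a n.+1.
Proof. by elim: n => //= n IH; rewrite rmulA IH. Qed.

Lemma peval_sum (R : rng) (s : seq int) (a : R) :
  peval s a = \sum_(i < size s) rpowS a i *~ nth 0 s i.
Proof.
elim: s => [|c s IH] /=; first by rewrite big_ord0.
rewrite big_ord_recl IH rmul_sumr; congr (_ + _); apply: eq_bigr => i _.
by rewrite rmulzr rmul_rpowS.
Qed.

Lemma eval_foldr_tAdd (R : rng) (b : nat -> R) (ts : seq term) :
  eval b (foldr tAdd tZero ts) = \sum_(t <- ts) eval b t.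
Proof. by elim: ts => [|t ts IH]; rewrite ?big_nil ?big_cons //= IH. Qed.

Lemma eval_lin_x2g (R : rng) (b : nat -> R) (c : int) (rest : seq int) :
  eval b (tAdd (tScal c (tVar 0)) (x2g (Poly rest) (tVar 0))) = peval (c :: rest) (b 0%N).
Proof.
rewrite /= /x2g eval_foldr_tAdd big_map.
have -> : iota 0 (size (Poly rest)) = index_iota 0 (size (Poly rest)).
  by rewrite /index_iota subn0.
rewrite big_mkord peval_sum rmul_sumr; congr (_ + _).
rewrite (eq_bigr (fun i : 'I_ _ => rpowS (b 0%N) i.+1 *~ (Poly rest)`_i)); last first.
  by move=> i _; rewrite /= eval_tpowS.
rewrite (big_ord_widen (size rest) (fun i => rpowS (b 0%N) i.+1 *~ (Poly rest)`_i));
  last exact: size_Poly.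
rewrite big_mkcond; apply: eq_bigr => i _ /=; rewrite rmulzr rmul_rpowS coef_Poly.
case: ifP => // /negbT; rewrite -leqNgt => i_ge.
by rewrite -coef_Poly nth_default ?mulr0z.
Qed.

Lemma squarefree_prod_primes (n : nat) : (0 < n)%N ->
  (forall p, prime p -> ~~ (p * p %| n)%N) -> n = (\prod_(q <- primes n) q)%N.
Proof.
move=> n_gt0 n_sqf; rewrite {1}(prod_prime_decomp n_gt0) prime_decompE big_map /=.
apply: eq_big_seq => q; rewrite mem_primes => /and3P [q_pr _ q_dvd].
suff -> : logn q n = 1%N by rewrite expn1.
apply/eqP; rewrite eqn_leq logn_gt0 mem_primes q_pr n_gt0 q_dvd leqNgt.
apply/andP; split=> //; apply: contra (n_sqf q q_pr) => log_gt1.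
by rewrite mulnn pfactor_dvdn.
Qed.

Theorem proposition6 (E : term -> Prop) :
  (forall R S : rng, in_variety E R -> in_variety E S ->
     finite_rng R -> finite_rng S -> zd_graph_iso R S -> rng_iso R S) ->
  exists (m : nat) (g : {poly int}) (d : int),
    [/\ (0 < m)%N,
        T_ideal E (tScal m%:Z (tVar 0)),
        T_ideal E (tAdd (tScal d (tVar 0)) (x2g g (tVar 0))) &
        (d = 1 \/ exists qs : seq nat,
           [/\ qs != [::], uniq qs, all prime qs,
               all (fun q => q %| m)%N qs & d = (\prod_(q <- qs) q)%:Z])].
Proof.
move=> detE.
have [n [In n_gen]] := int_ideal_principal (id_lincoef0 E) (@id_lincoefD E) (@id_lincoefM E).
have n_sqf p : prime p -> ~~ (p * p %| n)%N.
  move=> p_pr; apply/negP => sq_dvd; apply: (lincoef_not_sq_dvd detE p_pr) => f Ef k.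
  by apply: dvdz_trans (n_gen _ (id_lincoef_lincoef k Ef)); exact: sq_dvd.
have n_gt0 : (0 < n)%N by move: (n_sqf 2%N isT); rewrite lt0n; apply: contra => /eqP->.
have [[|c rest] /= s0 sE] := In; first by move: s0 n_gt0 => [<-].
have c_neq0 : c != 0 by rewrite s0 eqz_nat -lt0n.
have [m m_gt0 mE] := one_var_identity_char sE c_neq0.
exists (m * n)%N, (Poly rest), n%:Z; split.
- by rewrite muln_gt0 m_gt0.
- by move=> R RE b; have /= mb := mE R RE b; rewrite /= PoszM mulrzA mb mul0rz.
- by move=> R RE b; rewrite -s0 eval_lin_x2g; apply: sE.
have n_prod := squarefree_prod_primes n_gt0 n_sqf.
have [-> | n_neq1] := eqVneq n 1%N; [by left | right; exists (primes n); split].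
- by apply: contra n_neq1 => /eqP prim0; rewrite n_prod prim0 big_nil.
- exact: primes_uniq.
- by apply/allP => q; rewrite mem_primes => /andP [].
- by apply/allP => q; rewrite mem_primes => /and3P [_ _ q_dvd]; rewrite dvdn_mull.
- by rewrite -n_prod.
Qed.
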